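(* For every $n\ge1$, the half space $\mathbb R^n_+=\{x\in\mathbb R^n:x_n\ge0\}$ is isomorphic in the category $\tilde{\mathcal A}$ to the orthant $(\mathbb R_+)^n=[0,\infty)^n\subset\mathbb R^n$; both carry the metric induced from the Euclidean metric of $\mathbb R^n$ and base point the origin. That is, there is a homeomorphism $T:(\mathbb R_+)^n\to\mathbb R^n_+$ such that both $T$ and $T^{-1}$ are morphisms of $\tilde{\mathcal A}$.
   Context: A map $f:X\to Y$ of metric spaces is asymptotically Lipschitz if there are $\lambda,s\ge0$ with $d_Y(f(x),f(x'))\le\lambda d_X(x,x')+s$. Morphisms of $\tilde{\mathcal A}$ between proper metric spaces with base points $x_0,y_0$ are continuous maps that are proper (preimages of compact sets compact), asymptotically Lipschitz, and have nonzero norm: there exist $c>0$, $b\ge 0$ with $d_Y(f(x),y_0)\ge c\,d_X(x,x_0)-b$ for all $x$. *)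

From HB Require Import structures.
From mathcomp Require Import all_boot all_order all_algebra.
From mathcomp Require Import all_classical all_reals all_analysis.
Set Implicit Arguments. Unset Strict Implicit. Unset Printing Implicit Defensive.
Import Order.TTheory GRing.Theory Num.Theory.
Import numFieldNormedType.Exports.
Local Open Scope classical_set_scope.
Local Open Scope ring_scope.

(* The topology used for continuity and
   compactness is MathComp-Analysis' canonical topology on 'rV[R]_n
   (the product topology), which is the topology of the Euclidean metric. *)

Definition eucl_dist (R : realType) (n : nat) (x y : 'rV[R]_n) : R :=
  Num.sqrt (\sum_(i < n) (x ord0 i - y ord0 i) ^+ 2).

Definition half_space (R : realType) (n : nat) : set 'rV[R]_n.+1 :=
  [set x | 0 <= x ord0 ord_max].

Definition orthant (R : realType) (n : nat) : set 'rV[R]_n :=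
  [set x | forall i, 0 <= x ord0 i].

Definition At_morphism (R : realType) (m n : nat)
    (X : set 'rV[R]_m) (Y : set 'rV[R]_n) (f : 'rV[R]_m -> 'rV[R]_n) : Prop :=
  [/\ (forall x, X x -> Y (f x)),
      {within X, continuous f},
      (forall K : set 'rV[R]_n, K `<=` Y -> compact K ->
          compact (X `&` f @^-1` K)),
      (exists lam s : R, [/\ 0 <= lam, 0 <= s &
          forall x x', X x -> X x' ->
            eucl_dist (f x) (f x') <= lam * eucl_dist x x' + s]) &
      (* nonzero norm, base points 0 *)
      (exists c b : R, [/\ 0 < c, 0 <= b &
          forall x, X x -> c * eucl_dist x 0 - b <= eucl_dist (f x) 0])].

From HB Require Import structures.
From mathcomp Require Import all_boot all_order all_algebra.
From mathcomp Require Import all_classical all_reals all_analysis.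
From mathcomp Require Import lra.
Import Order.TTheory GRing.Theory Num.Theory.
Import numFieldNormedType.Exports.
Local Open Scope classical_set_scope.
Local Open Scope ring_scope.

(* Split x = (x', t) with t the last coordinate.  The map
   (y', s) |-> (y' + t 1, t) with t = s - min(0, min y') sends the half space
   bijectively onto the orthant, its inverse being
   x |-> (x' - t 1, t + min(0, min (x' - t 1))).  Both maps are built from
   coordinates, differences and minima, so they are Lipschitz and fix the
   origin; a bi-Lipschitz bijection fixing the base point is proper and has
   nonzero norm, hence is an isomorphism of tilde-A. *)

Section RealLemmas.
Context {R : realDomainType}.

Lemma ler_sum_sqr (I : Type) (r : seq I) (F : I -> R) :
  (forall i, 0 <= F i) -> \sum_(i <- r) F i ^+ 2 <= (\sum_(i <- r) F i) ^+ 2.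
Proof.
move=> F_ge0; elim: r => [|a r IHr]; first by rewrite !big_nil expr0n.
rewrite !big_cons.
have sum_ge0 : 0 <= \sum_(i <- r) F i by apply: sumr_ge0.
have := F_ge0 a; nra.
Qed.

Lemma ler_dist_min (a b a' b' M : R) :
  `|a - a'| <= M -> `|b - b'| <= M -> `|Num.min a b - Num.min a' b'| <= M.
Proof.
move=> /ler_normlP[? ?] /ler_normlP[? ?]; apply/ler_normlP.
by case: (leP a b) => ?; case: (leP a' b') => ?; split; lra.
Qed.

End RealLemmas.

Section EuclideanDistance.
Context {R : realType} {m : nat}.
Implicit Types x y : 'rV[R]_m.

Lemma eucl_dist_ge0 x y : 0 <= eucl_dist x y.
Proof. exact: sqrtr_ge0. Qed.

Lemma ler_dist_coord_eucl x y i : `|x ord0 i - y ord0 i| <= eucl_dist x y.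
Proof.
rewrite /eucl_dist -sqrtr_sqr; apply: ler_wsqrtr.
by rewrite (bigD1 i) //= lerDl; apply: sumr_ge0 => j _; exact: sqr_ge0.
Qed.

Lemma eucl_dist_le_sum x y : eucl_dist x y <= \sum_i `|x ord0 i - y ord0 i|.
Proof.
have sum_ge0 : 0 <= \sum_i `|x ord0 i - y ord0 i| by apply: sumr_ge0.
rewrite /eucl_dist -(ger0_norm sum_ge0) -sqrtr_sqr; apply: ler_wsqrtr.
under eq_bigr do rewrite -real_normK ?num_real //.
exact: ler_sum_sqr.
Qed.

Lemma eucl_dist_le_coord x y M :
  (forall i, `|x ord0 i - y ord0 i| <= M) -> eucl_dist x y <= m%:R * M.
Proof.
move=> dist_le; apply: le_trans (eucl_dist_le_sum _ _) _.
apply: le_trans (ler_sum _ (fun i _ => dist_le i)) _.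
by rewrite sumr_const card_ord mulr_natl.
Qed.

Lemma normr_le_eucl_dist x y : `|x - y| <= eucl_dist x y.
Proof.
rewrite (_ : `|x - y| = mx_norm (x - y)) // mx_normrE; apply/bigmax_leP.
split=> [|[a i] _ /=]; first exact: eucl_dist_ge0.
by rewrite (ord1 a) !mxE; exact: ler_dist_coord_eucl.
Qed.

Lemma eucl_dist_le_normr x y : eucl_dist x y <= m%:R * `|x - y|.
Proof.
apply: eucl_dist_le_coord => i.
rewrite (_ : `|x - y| = mx_norm (x - y)) // mx_normrE; apply/bigmax_geP.
by right; exists (ord0, i) => //=; rewrite !mxE.
Qed.

End EuclideanDistance.

Definition eucl_lipschitz {R : realType} {m k : nat} (L : R)
    (f : 'rV[R]_m -> 'rV[R]_k) :=
  forall x y, eucl_dist (f x) (f y) <= L * eucl_dist x y.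

Lemma eucl_lipschitz_continuous {R : realType} {m k : nat} {L : R}
    (f : 'rV[R]_m -> 'rV[R]_k) :
  0 <= L -> eucl_lipschitz L f -> continuous f.
Proof.
move=> L_ge0 f_lip; set C := L * m%:R + 1.
have C_gt0 : 0 < C by rewrite ltr_wpDl // mulr_ge0.
have f_normlip y y' : `|f y - f y'| <= C * `|y - y'|.
  apply: le_trans (normr_le_eucl_dist _ _) _.
  apply: le_trans (f_lip y y') _.
  apply: le_trans (ler_wpM2l L_ge0 (eucl_dist_le_normr y y')) _.
  by rewrite mulrA ler_wpM2r // lerDl.
move=> x; apply/(@cvgrPdist_lt _ _ _ _ (nbhs_filter x)) => e e_gt0.
near=> y; apply: le_lt_trans (f_normlip x y) _.
rewrite mulrC -ltr_pdivlMr //; near: y.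
by apply: cvgr_dist_lt; [exact: cvg_id | exact: divr_gt0].
Unshelve. all: by end_near.
Qed.

Section BiLipschitz.
Context {R : realType} {m k : nat} {L : R}.
Hypothesis L_gt0 : 0 < L.

Lemma bilipschitz_At_morphism {X : set 'rV[R]_m} {Y : set 'rV[R]_k}
    {f : 'rV[R]_m -> 'rV[R]_k} {g : 'rV[R]_k -> 'rV[R]_m} :
  (forall x, X x -> Y (f x)) -> (forall y, Y y -> X (g y)) ->
  (forall x, X x -> g (f x) = x) -> (forall y, Y y -> f (g y) = y) ->
  eucl_lipschitz L f -> eucl_lipschitz L g -> g 0 = 0 ->
  At_morphism X Y f.
Proof.
move=> XY YX gK fK f_lip g_lip g0.
have f_cont := eucl_lipschitz_continuous f (ltW L_gt0) f_lip.
have g_cont := eucl_lipschitz_continuous g (ltW L_gt0) g_lip.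
split=> //; first exact: continuous_subspaceT.
- move=> K KY K_compact.
  have -> : X `&` f @^-1` K = g @` K.
    apply/seteqP; split=> [x [Xx Kfx]|_ [y Ky <-]].
      by exists (f x); rewrite ?gK.
    by split; [exact/YX/KY | rewrite /= fK //; exact: KY].
  by apply: continuous_compact => //; exact: continuous_subspaceT.
- exists L, 0; split=> //; first exact: ltW.
  by move=> x x' _ _; rewrite addr0.
- exists L^-1, 0; split=> //; first by rewrite invr_gt0.
  move=> x Xx; rewrite subr0 -(ler_pM2l L_gt0) mulrA mulfV ?gt_eqF // mul1r.
  by have := g_lip (f x) 0; rewrite gK // g0.
Qed.

End BiLipschitz.

Section HalfSpaceOrthant.
Context {R : realType} {n : nat}.
Implicit Types x y : 'rV[R]_n.+1.

Definition min_init y : R := \big[Num.min/0]_(i | i != ord_max) y ord0 i.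

Definition sub_last x : 'rV[R]_n.+1 := \row_j (x ord0 j - x ord0 ord_max).

Definition orthant_to_half x : 'rV[R]_n.+1 := \row_j
  (if j == ord_max then x ord0 ord_max + min_init (sub_last x)
   else x ord0 j - x ord0 ord_max).

Definition half_to_orthant y : 'rV[R]_n.+1 := \row_j
  (if j == ord_max then y ord0 ord_max - min_init y
   else y ord0 j + y ord0 ord_max - min_init y).

Lemma eq_min_init y y' :
  (forall i, i != ord_max -> y ord0 i = y' ord0 i) -> min_init y = min_init y'.
Proof. exact: eq_bigr. Qed.

Lemma min_init_le y j : j != ord_max -> min_init y <= y ord0 j.
Proof. by move=> j_neq; apply: bigmin_le_cond. Qed.

Lemma min_init_le0 y : min_init y <= 0.
Proof. exact: bigmin_le_id. Qed.

Lemma min_init_ge c y :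
  c <= 0 -> (forall i, i != ord_max -> c <= y ord0 i) -> c <= min_init y.
Proof. exact: le_bigmin. Qed.

Lemma ler_dist_min_init y y' M : 0 <= M ->
  (forall i, i != ord_max -> `|y ord0 i - y' ord0 i| <= M) ->
  `|min_init y - min_init y'| <= M.
Proof.
move=> M_ge0 dist_le; apply: (big_ind2 (fun a b => `|a - b| <= M)) => //.
- by rewrite subrr normr0.
- by move=> *; exact: ler_dist_min.
Qed.

Lemma min_init0 : min_init 0 = 0.
Proof.
apply/le_anti; rewrite min_init_le0 min_init_ge // => i _.
by rewrite mxE.
Qed.

Lemma min_init_orthant_to_half x :
  min_init (orthant_to_half x) = min_init (sub_last x).
Proof. by apply: eq_min_init => i /negbTE i_neq; rewrite !mxE i_neq. Qed.

Lemma min_init_half_to_orthant y :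
  min_init (sub_last (half_to_orthant y)) = min_init y.
Proof.
by apply: eq_min_init => i /negbTE i_neq; rewrite !mxE i_neq eqxx; lra.
Qed.

Lemma orthant_to_halfK x : half_to_orthant (orthant_to_half x) = x.
Proof.
apply/rowP => j; rewrite !mxE eqxx min_init_orthant_to_half.
by case: eqP => [->|_]; lra.
Qed.

Lemma half_to_orthantK y : orthant_to_half (half_to_orthant y) = y.
Proof.
apply/rowP => j; rewrite !mxE eqxx min_init_half_to_orthant.
by case: eqP => [->|_]; lra.
Qed.

Lemma orthant_to_half_in x : orthant x -> half_space (orthant_to_half x).
Proof.
move=> x_orth; rewrite /half_space /= mxE eqxx.
suff : - x ord0 ord_max <= min_init (sub_last x) by lra.
apply: min_init_ge => [|i _]; first by rewrite oppr_le0.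
by rewrite mxE; have := x_orth i; lra.
Qed.

Lemma half_to_orthant_in y : half_space y -> orthant (half_to_orthant y).
Proof.
rewrite /half_space /= => y_last i; rewrite mxE.
have := min_init_le0 y.
case: eqP => [_|/eqP i_neq] ?; first lra.
by have := min_init_le y _ i_neq; lra.
Qed.

Lemma orthant_to_half0 : orthant_to_half 0 = 0.
Proof.
have sub_last0 : sub_last 0 = 0 by apply/rowP => i; rewrite !mxE subrr.
by apply/rowP => j; rewrite !mxE sub_last0 min_init0; case: ifP => _; lra.
Qed.

Lemma half_to_orthant0 : half_to_orthant 0 = 0.
Proof. by apply/rowP => j; rewrite !mxE min_init0; case: ifP => _; lra. Qed.

(* Each coordinate of either map moves by at most three times the distance. *)
Let lip_const : R := n.+1%:R * 3.

Lemma lip_const_gt0 : 0 < lip_const.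
Proof. by rewrite mulr_gt0 ?ltr0n. Qed.

Lemma orthant_to_half_lipschitz : eucl_lipschitz lip_const orthant_to_half.
Proof.
move=> x y; rewrite -mulrA; apply: eucl_dist_le_coord => j.
have /ler_normlP[? ?] := ler_dist_coord_eucl x y ord_max.
have /ler_normlP[? ?] := ler_dist_coord_eucl x y j.
have /ler_normlP[? ?] :
    `|min_init (sub_last x) - min_init (sub_last y)| <= 2 * eucl_dist x y.
  apply: ler_dist_min_init => [|i _]; first by rewrite mulr_ge0 ?eucl_dist_ge0.
  have /ler_normlP[? ?] := ler_dist_coord_eucl x y i.
  by rewrite !mxE; apply/ler_normlP; split; lra.
by rewrite !mxE; case: ifP => _; apply/ler_normlP; split; lra.
Qed.

Lemma half_to_orthant_lipschitz : eucl_lipschitz lip_const half_to_orthant.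
Proof.
move=> x y; rewrite -mulrA; apply: eucl_dist_le_coord => j.
have /ler_normlP[? ?] := ler_dist_coord_eucl x y ord_max.
have /ler_normlP[? ?] := ler_dist_coord_eucl x y j.
have /ler_normlP[? ?] : `|min_init x - min_init y| <= eucl_dist x y.
  by apply: ler_dist_min_init => [|i _]; [exact: eucl_dist_ge0 |
                                          exact: ler_dist_coord_eucl].
by rewrite !mxE; case: ifP => _; apply/ler_normlP; split; lra.
Qed.

Lemma orthant_to_half_At_morphism :
  At_morphism (@orthant R n.+1) (@half_space R n) orthant_to_half.
Proof.
exact: (bilipschitz_At_morphism lip_const_gt0
  orthant_to_half_in half_to_orthant_in
  (fun x _ => orthant_to_halfK x) (fun y _ => half_to_orthantK y)
  orthant_to_half_lipschitz half_to_orthant_lipschitz half_to_orthant0).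
Qed.

Lemma half_to_orthant_At_morphism :
  At_morphism (@half_space R n) (@orthant R n.+1) half_to_orthant.
Proof.
exact: (bilipschitz_At_morphism lip_const_gt0
  half_to_orthant_in orthant_to_half_in
  (fun y _ => half_to_orthantK y) (fun x _ => orthant_to_halfK x)
  half_to_orthant_lipschitz orthant_to_half_lipschitz orthant_to_half0).
Qed.

End HalfSpaceOrthant.

Theorem lemma4p2 (R : realType) (n : nat) :
  exists (T Tinv : 'rV[R]_n.+1 -> 'rV[R]_n.+1),
    [/\ (forall x, orthant x -> Tinv (T x) = x),
        (forall y, half_space y -> T (Tinv y) = y),
        At_morphism (@orthant R n.+1) (@half_space R n) T &
        At_morphism (@half_space R n) (@orthant R n.+1) Tinv].
Proof.
exists (@orthant_to_half R n), (@half_to_orthant R n); split.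
- by move=> x _; exact: orthant_to_halfK.
- by move=> y _; exact: half_to_orthantK.
- exact: orthant_to_half_At_morphism.
- exact: half_to_orthant_At_morphism.
Qed.
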